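(* Let $M$ be a matroid on a finite set $E(M)$ and $\lambda\colon E(M)\to\mathbb{N}$. Choose pairwise disjoint finite sets $E_e$ ($e\in E(M)$) with $\#E_e=\lambda(e)$ and $e\in E_e$, and put $E(M_\lambda)=\bigsqcup_{e\in E(M)}E_e$. Let $\mathcal{B}(M_\lambda)$ be the collection of all subsets $B\subseteq E(M_\lambda)$ for which there are a basis $B'$ of $M$ and elements $x_e\in E_e$ for each $e\in E(M)-B'$ such that $B=E(M_\lambda)-\{x_e : e\notin B'\}$. Then $\mathcal{B}(M_\lambda)$ is the set of bases of a matroid on $E(M_\lambda)$.
   Context: $\mathbb{N}$ denotes the positive integers. *)

From mathcomp Require Import all_boot.
Set Implicit Arguments. Unset Strict Implicit. Unset Printing Implicit Defensive.

Definition is_matroid_bases (T : finType) (Bs : {set {set T}}) : Prop :=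
  Bs != set0 /\
  forall B1 B2, B1 \in Bs -> B2 \in Bs ->
    forall x, x \in B1 :\: B2 ->
      exists2 y, y \in B2 :\: B1 & (B1 :\ x) :|: [set y] \in Bs.

(* The ground set E(M_lambda) is a finite type U
   together with p : U -> T, the fibre p^-1(e) being the block E_e. *)
Definition par_ext_bases (T U : finType) (p : U -> T) (Bs : {set {set T}})
  : {set {set U}} :=
  [set B : {set U} | [exists B' in Bs, exists x : {ffun T -> U},
      [forall e in ~: B', p (x e) == e] &&
      (B == ~: [set x e | e in ~: B'])]].

From mathcomp Require Import all_boot.

Set Implicit Arguments.
Unset Strict Implicit.
Unset Printing Implicit Defensive.

(* A basis of M_lambda is determined by a basis B' of M and a choice x of one
   deleted element in each block outside B'.  Exchanging u out of such a basis
   either moves the deleted element of the block of u to u (when that block is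
   outside B'), or, when the block e of u lies in B', uses the exchange e -> f
   in M and deletes u in place of the block of f. *)

Definition basis_exchange (T : finType) (Bs : {set {set T}}) : Prop :=
  forall B1 B2, B1 \in Bs -> B2 \in Bs ->
    forall x, x \in B1 :\: B2 ->
      exists2 y, y \in B2 :\: B1 & (B1 :\ x) :|: [set y] \in Bs.

Section ParallelExtension.

Variables (T U : finType) (p : U -> T).

Definition par_ext_basis (B' : {set T}) (x : T -> U) : {set U} :=
  ~: [set x e | e in ~: B'].

Lemma par_ext_basesP (Bs : {set {set T}}) B :
  reflect (exists B' (x : T -> U),
             [/\ B' \in Bs, {in ~: B', cancel x p} & B = par_ext_basis B' x])
          (B \in par_ext_bases p Bs).
Proof.
rewrite inE; apply: (iffP exists_inP).
  move=> [B' B'_Bs /existsP [x /andP [/forall_inP xK /eqP ->]]].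
  by exists B', x; split=> // e /xK /eqP.
move=> [B' [x [B'_Bs xK ->]]]; exists B' => //.
apply/existsP; exists (finfun x).
apply/andP; split; first by apply/forall_inP => e /xK; rewrite ffunE => ->.
by apply/eqP; congr (~: _); apply: eq_imset => e; rewrite ffunE.
Qed.

Lemma in_par_ext_basis B' x (xK : {in ~: B', cancel x p}) u :
  (u \in par_ext_basis B' x) = (p u \in B') || (x (p u) != u).
Proof.
rewrite inE -[RHS]negbK negb_or negbK; congr (~~ _).
apply/imsetP/andP => [[e e_out ->]|[pu_out /eqP xpu]].
  by rewrite xK // -in_setC e_out.
by exists (p u); rewrite ?in_setC.
Qed.

Section Basis.

Variables (B' : {set T}) (x : T -> U).
Hypothesis xK : {in ~: B', cancel x p}.

Lemma par_ext_basisU1 f :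
  f \notin B' -> par_ext_basis (f |: B') x = x f |: par_ext_basis B' x.
Proof.
move=> f_out; have xfK : p (x f) = f by rewrite xK // in_setC.
have xK' : {in ~: (f |: B'), cancel x p}.
  by move=> e; rewrite !inE negb_or => /andP [_ e_out]; rewrite xK // in_setC.
apply/setP => w; rewrite (in_par_ext_basis xK') !in_setU1 (in_par_ext_basis xK).
have [->|w_ne] := eqVneq w (x f); first by rewrite xfK eqxx.
have [pw_f|_] := eqVneq (p w) f; last by [].
by rewrite pw_f (eq_sym (x f)) w_ne !orbT.
Qed.

Variables (e : T) (u : U).
Hypothesis ue : p u = e.

Lemma par_ext_basis_update_in :
  e \in B' -> par_ext_basis (B' :\ e) [eta x with e |-> u]
              = par_ext_basis B' x :\ u.
Proof.
move=> e_in.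
have xK' : {in ~: (B' :\ e), cancel [eta x with e |-> u] p}.
  move=> g; rewrite !inE negb_and negbK /=.
  by have [->|_ /= g_out] := eqVneq g e; last by rewrite xK // in_setC.
apply/setP => w.
rewrite (in_par_ext_basis xK') !in_setD1 (in_par_ext_basis xK) /=.
have [pw_e|pw_ne] := eqVneq (p w) e; first by rewrite pw_e e_in eq_sym /= andbT.
by have [w_u|] := eqVneq w u; first by rewrite w_u ue eqxx in pw_ne.
Qed.

Lemma par_ext_basis_update_out :
  e \notin B' -> x e != u ->
  par_ext_basis B' [eta x with e |-> u] = x e |: (par_ext_basis B' x :\ u).
Proof.
move=> e_out xe_ne.
have xK' : {in ~: B', cancel [eta x with e |-> u] p}.
  by move=> g g_out /=; have [->|_] := eqVneq g e; last exact: xK.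
apply/setP => w.
rewrite (in_par_ext_basis xK') in_setU1 in_setD1 (in_par_ext_basis xK) /=.
have [pw_e|pw_ne] := eqVneq (p w) e.
  rewrite pw_e (negbTE e_out) eq_sym /=.
  by have [->|] := eqVneq w (x e); rewrite ?xe_ne ?andbT.
have [w_xe|] := eqVneq w (x e).
  by rewrite w_xe xK ?in_setC ?eqxx in pw_ne.
by have [w_u|] := eqVneq w u; first by rewrite w_u ue eqxx in pw_ne.
Qed.

End Basis.

Lemma par_ext_bases_neq0 (Bs : {set {set T}}) (emb : T -> U) :
  cancel emb p -> Bs != set0 -> par_ext_bases p Bs != set0.
Proof.
move=> embK /set0Pn [B' B'_Bs]; apply/set0Pn; exists (par_ext_basis B' emb).
by apply/par_ext_basesP; exists B', emb; split=> // e _; apply: embK.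
Qed.

Lemma par_ext_bases_exchange (Bs : {set {set T}}) :
  basis_exchange Bs -> basis_exchange (par_ext_bases p Bs).
Proof.
move=> Bs_exch B1 B2 /par_ext_basesP [B1' [x1 [B1'_Bs x1K ->]]].
move=> /par_ext_basesP [B2' [x2 [B2'_Bs x2K ->]]] u.
rewrite inE (in_par_ext_basis x2K) (in_par_ext_basis x1K) negb_or negbK.
move=> /andP [/andP [e_out2 /eqP x2e] u_in1].
set e := p u in e_out2 x2e u_in1; have ue : p u = e by [].
have x1e_out g : g \notin B1' -> p (x1 g) = g.
  by move=> g_out; rewrite x1K ?in_setC.
have [e_in1|e_out1] := boolP (e \in B1').
  have e_diff : e \in B1' :\: B2' by rewrite inE e_out2.
  have [f] := Bs_exch _ _ B1'_Bs B2'_Bs e e_diff.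
  rewrite inE => /andP [f_out1 f_in2] B1''_Bs.
  have f_ne : f != e by apply: contraNneq f_out1 => ->.
  exists (x1 f).
    rewrite inE (in_par_ext_basis x2K) (in_par_ext_basis x1K) x1e_out //.
    by rewrite f_in2 (negbTE f_out1) eqxx.
  have x1'K : {in ~: (B1' :\ e), cancel [eta x1 with e |-> u] p}.
    by move=> g; rewrite !inE negb_and negbK /=; case: eqP => // _ /x1e_out.
  apply/par_ext_basesP; exists (f |: (B1' :\ e)), [eta x1 with e |-> u].
  split; first by rewrite setUC.
    move=> g; rewrite in_setC in_setU1 negb_or => /andP [_ g_out].
    by rewrite x1'K ?in_setC.
  rewrite (par_ext_basisU1 x1'K) ?in_setD1 ?negb_and ?f_out1 ?orbT //=.
  by rewrite (negbTE f_ne) (par_ext_basis_update_in x1K ue e_in1) setUC.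
have x1e_ne : x1 e != u by move: u_in1; rewrite (negbTE e_out1).
exists (x1 e).
  rewrite inE (in_par_ext_basis x2K) (in_par_ext_basis x1K) x1e_out //.
  by rewrite (negbTE e_out1) eqxx (negbTE e_out2) x2e eq_sym x1e_ne.
apply/par_ext_basesP; exists B1', [eta x1 with e |-> u]; split=> //.
  by move=> g g_out /=; case: eqP => // _; apply: x1K.
by rewrite (par_ext_basis_update_out x1K ue e_out1 x1e_ne) setUC.
Qed.

End ParallelExtension.

Theorem proposition3p3 (T U : finType) (Bs : {set {set T}})
  (lambda : T -> nat) (p : U -> T) (emb : T -> U) :
  is_matroid_bases Bs ->
  (forall e, 0 < lambda e) ->
  (forall e, #|[set u | p u == e]| = lambda e) ->
  (forall e, p (emb e) = e) ->
  is_matroid_bases (par_ext_bases p Bs).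
Proof.
(* Only the nonemptiness of the blocks matters, and emb already provides it. *)
move=> [Bs_neq0 Bs_exch] _ _ embK; split.
  exact: par_ext_bases_neq0 embK Bs_neq0.
exact: par_ext_bases_exchange.
Qed.
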